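(* Let $\mathbb{F}$ be a field of characteristic zero and $n\ge1$. Let $L^n_{\mathbb{F}}$ be the set of all $A\in M_n(\mathbb{F})$ such that the Schur map $S_A\colon M_n(\mathbb{F})\to M_n(\mathbb{F})$, $S_A(B)=A\circ B$, is nonzero and multiplicative, and let $G^n_{\mathbb{F}}=\{A\in M_n(\mathbb{F}) : \text{there is }\lambda\in\mathbb{F}^{*}\text{ with } a_{ij}=\lambda^{j-i}\text{ for all } i,j\}$. Then $L^n_{\mathbb{F}}$, equipped with the Schur product, is an abelian group, and $G^n_{\mathbb{F}}$ is a subgroup of it consisting of Toeplitz matrices.
   Context: $A\circ B=(a_{ij}b_{ij})$ is the entrywise (Schur) product; $\mathbb{F}^*=\mathbb{F}\setminus\{0\}$. A Toeplitz matrix is one with $a_{ij}=a_{i+1,j+1}$ whenever both are defined. *)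

From mathcomp Require Import all_boot all_order all_algebra.
Set Implicit Arguments. Unset Strict Implicit. Unset Printing Implicit Defensive.
Import GRing.Theory Num.Theory.
Local Open Scope ring_scope.

Definition schur (F : fieldType) (n : nat) (A B : 'M[F]_n) : 'M[F]_n :=
  \matrix_(i, j) (A i j * B i j).

Definition ones (F : fieldType) (n : nat) : 'M[F]_n := \matrix_(i, j) 1.

Definition inL (F : fieldType) (n : nat) (A : 'M[F]_n) : Prop :=
  (exists B : 'M[F]_n, schur A B != 0) /\
  (forall B C : 'M[F]_n, schur A (B *m C) = schur A B *m schur A C).

Definition inG (F : fieldType) (n : nat) (A : 'M[F]_n) : Prop :=
  exists2 l : F, l != 0 &
    forall i j : 'I_n, A i j = l ^ ((nat_of_ord j)%:Z - (nat_of_ord i)%:Z).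

Definition toeplitz (F : fieldType) (n : nat) (A : 'M[F]_n) : Prop :=
  forall i j i' j' : 'I_n, nat_of_ord i' = (i.+1)%N -> nat_of_ord j' = (j.+1)%N ->
    A i j = A i' j'.

From mathcomp Require Import all_boot all_order all_algebra.
Set Implicit Arguments. Unset Strict Implicit. Unset Printing Implicit Defensive.
Import GRing.Theory.
Local Open Scope ring_scope.

(* Testing multiplicativity of S_A on matrix units [delta_mx i k *m delta_mx k j]
   shows that A lies in L exactly when a_ij = a_ik a_kj for all i, k, j and A is
   nonzero; then a_ii = 1 and a_ji = a_ij^-1.  This cocycle condition is stable under
   entrywise products and inverses, and a_ij = l^(j-i) satisfies it. *)

Section SchurMultiplicative.

Variables (F : fieldType) (n : nat).
Implicit Types A B C : 'M[F]_n.

Definition cocycle A : Prop := forall i k j, A i j = A i k * A k j.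

Lemma schurA A B C : schur A (schur B C) = schur (schur A B) C.
Proof. by apply/matrixP => i j; rewrite !mxE mulrA. Qed.

Lemma schurC A B : schur A B = schur B A.
Proof. by apply/matrixP => i j; rewrite !mxE mulrC. Qed.

Lemma schur1m A : schur (ones F n) A = A.
Proof. by apply/matrixP => i j; rewrite !mxE mul1r. Qed.

Lemma schur_delta_mx A i k : schur A (delta_mx i k) = A i k *: delta_mx i k.
Proof.
apply/matrixP => a b; rewrite !mxE.
by case: (eqVneq a i) => [->|]; case: (eqVneq b k) => [->|]; rewrite ?mulr0 ?mulr1.
Qed.

Lemma inL_cocycle A : inL A -> cocycle A.
Proof.
move=> [_ schurAM] i k j.
have := schurAM (delta_mx i k) (delta_mx k j).
rewrite mul_delta_mx !schur_delta_mx -scalemxAl -scalemxAr scalerA mul_delta_mx.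
by move/matrixP => /(_ i j); rewrite !mxE !eqxx !mulr1.
Qed.

Lemma cocycle_inL A :
  (0 < n)%N -> cocycle A -> (forall i, A i i = 1) -> inL A.
Proof.
move=> n_gt0 cocA diagA; split.
  exists (ones F n); apply/eqP => /matrixP /(_ (Ordinal n_gt0) (Ordinal n_gt0)).
  by rewrite !mxE diagA mulr1 => /eqP; rewrite oner_eq0.
move=> B C; apply/matrixP => i j; rewrite !mxE mulr_sumr.
by apply: eq_bigr => l _; rewrite !mxE (cocA i l j) mulrACA.
Qed.

Lemma cocycle_diag_eq A i k : cocycle A -> A i i = A k k.
Proof. by move=> cocA; rewrite (cocA i k i) (cocA k i k) mulrC. Qed.

Lemma inL_diag A i : inL A -> A i i = 1.
Proof.
move=> LA; have cocA := inL_cocycle LA; case: LA => [[B nzAB] _].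
have /existsP[k /existsP[j nzAkj]] : [exists k, exists j, A k j != 0].
  apply: contraR nzAB => /existsPn zA; apply/eqP/matrixP => a b.
  by move/existsPn: (zA a) => /(_ b); rewrite negbK !mxE => /eqP->; rewrite mul0r.
rewrite (cocycle_diag_eq i k cocA); apply: (mulIf nzAkj).
by rewrite mul1r -cocA.
Qed.

Lemma inL_neq0 A i j : inL A -> A i j != 0.
Proof.
move=> LA; apply: contra_eq_neq (inL_diag i LA) => Aij0.
by rewrite (inL_cocycle LA i j i) Aij0 mul0r eq_sym oner_neq0.
Qed.

Hypothesis n_gt0 : (0 < n)%N.

Lemma inL_ones : inL (ones F n).
Proof. by apply: cocycle_inL => // [i k j|i]; rewrite !mxE ?mulr1. Qed.

Lemma inL_schur A B : inL A -> inL B -> inL (schur A B).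
Proof.
move=> LA LB; apply: cocycle_inL => // [i k j|i]; rewrite !mxE.
  by rewrite (inL_cocycle LA i k j) (inL_cocycle LB i k j) mulrACA.
by rewrite !inL_diag // mulr1.
Qed.

Lemma inL_schur_inv A :
  inL A -> exists2 B, inL B & schur A B = ones F n.
Proof.
move=> LA; exists (\matrix_(i, j) (A i j)^-1).
  apply: cocycle_inL => // [i k j|i]; rewrite !mxE.
    by rewrite (inL_cocycle LA i k j) invfM.
  by rewrite inL_diag // invr1.
by apply/matrixP => i j; rewrite !mxE divff // inL_neq0.
Qed.

Lemma inG_inL A : inG A -> inL A.
Proof.
move=> [l l_neq0 defA]; apply: cocycle_inL => // [i k j|i].
  by rewrite !defA -expfzDr //; congr (_ ^ _); rewrite [RHS]addrC addrA subrK.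
by rewrite defA subrr expr0z.
Qed.

End SchurMultiplicative.

Section PowerMatrices.

Variables (F : fieldType) (n : nat).
Implicit Types A B : 'M[F]_n.

Lemma inG_ones : inG (ones F n).
Proof. by exists 1 => [|i j]; rewrite ?oner_neq0 // mxE exp1rz. Qed.

Lemma inG_schur A B : inG A -> inG B -> inG (schur A B).
Proof.
move=> [l l_neq0 defA] [m m_neq0 defB]; exists (l * m); first by rewrite mulf_neq0.
by move=> i j; rewrite mxE defA defB expfzMl.
Qed.

Lemma inG_schur_inv A : inG A -> exists2 B, inG B & schur A B = ones F n.
Proof.
move=> [l l_neq0 defA].
exists (\matrix_(i, j) l^-1 ^ ((nat_of_ord j)%:Z - (nat_of_ord i)%:Z)).
  by exists l^-1 => [|i j]; rewrite ?invr_neq0 ?mxE.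
by apply/matrixP => i j; rewrite !mxE defA -expfzMl divff // exp1rz.
Qed.

Lemma inG_toeplitz A : inG A -> toeplitz A.
Proof.
move=> [l _ defA] i j i' j' def_i' def_j'; rewrite !defA def_i' def_j'; congr (_ ^ _).
by rewrite !intS opprD addrACA subrr add0r.
Qed.

End PowerMatrices.

Theorem proposition3p2 (F : fieldType) (n : nat) :
  [pchar F] =i pred0 -> (0 < n)%N ->
  ((forall A B : 'M[F]_n, inL A -> inL B -> inL (schur A B)) /\
   (forall A B C : 'M[F]_n, schur A (schur B C) = schur (schur A B) C) /\
   (forall A B : 'M[F]_n, schur A B = schur B A) /\
   inL (ones F n) /\
   (forall A : 'M[F]_n, inL A -> schur (ones F n) A = A) /\
   (forall A : 'M[F]_n, inL A ->
      exists2 B : 'M[F]_n, inL B & schur A B = ones F n)) /\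
  ((forall A : 'M[F]_n, inG A -> inL A) /\
   inG (ones F n) /\
   (forall A B : 'M[F]_n, inG A -> inG B -> inG (schur A B)) /\
   (forall A : 'M[F]_n, inG A ->
      exists2 B : 'M[F]_n, inG B & schur A B = ones F n) /\
   (forall A : 'M[F]_n, inG A -> toeplitz A)).
Proof.
move=> _ n_gt0; split.
  split; first exact: inL_schur.
  split; first exact: schurA.
  split; first exact: schurC.
  split; first exact: inL_ones.
  split; first by move=> A _; exact: schur1m.
  exact: inL_schur_inv.
split; first exact: inG_inL.
split; first exact: inG_ones.
split; first exact: inG_schur.
split; first exact: inG_schur_inv.
exact: inG_toeplitz.
Qed.
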